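(* Let $F$ be a graph and $r\ge 2$ an integer. There is a constant $C=C(F,r)$ such that for every $n$ and every $n$-vertex $r$-uniform hypergraph $\mathcal{H}$ that is $\mathrm{Tr}(F)$-free, the shadow graph of $\mathcal{H}$ contains at most $C\,n^{|V(F)|-1}$ copies of $F$.
   Context: The shadow graph of a hypergraph $\mathcal{H}$ has vertex set $V(\mathcal{H})$, with $uv$ an edge if and only if some hyperedge of $\mathcal{H}$ contains both $u$ and $v$. $\mathrm{Tr}(F)$ denotes the family of $r$-uniform hypergraphs $\mathcal{F}$ for which $V(F)\subseteq V(\mathcal{F})$ and there is a bijection $f$ from the edges of $F$ to the hyperedges of $\mathcal{F}$ with $f(e)\cap V(F)=e$ for every edge $e$ of $F$. An $r$-uniform hypergraph is $\mathrm{Tr}(F)$-free if it contains no subhypergraph isomorphic to a member of $\mathrm{Tr}(F)$. Copies of $F$ are not necessarily induced subgraphs. *)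

From mathcomp Require Import all_boot.
Set Implicit Arguments. Unset Strict Implicit. Unset Printing Implicit Defensive.

Definition is_graph (V : finType) (E : {set {set V}}) : Prop :=
  forall e, e \in E -> #|e| = 2.

Definition is_uniform (V : finType) (r : nat) (H : {set {set V}}) : Prop :=
  forall h, h \in H -> #|h| = r.

Definition shadow (n : nat) (H : {set {set 'I_n}}) : {set {set 'I_n}} :=
  [set e : {set 'I_n} | (#|e| == 2) && [exists h in H, e \subset h]].

Definition embeddings (VF : finType) (EF : {set {set VF}}) (n : nat)
    (G : {set {set 'I_n}}) : {set {ffun VF -> 'I_n}} :=
  [set f : {ffun VF -> 'I_n} | injectiveb f && [forall e : {set VF}, (e \in EF) ==> (f @: e \in G)]].

(* copies of F in G: the (not necessarily induced) subgraphs of G isomorphic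
   to F, each recorded as (vertex set, edge set) *)
Definition copies (VF : finType) (EF : {set {set VF}}) (n : nat)
    (G : {set {set 'I_n}}) : {set {set 'I_n} * {set {set 'I_n}}} :=
  (fun f : {ffun VF -> 'I_n} => (f @: [set: VF], [set f @: e | e : {set VF} in EF]))
    @: embeddings EF G.

(* H contains (a subhypergraph isomorphic to) a member of Tr(F):
   an injective vertex map phi of V(F) into V(H) and an injective map g from
   E(F) into the hyperedges of H with g(e) ∩ phi(V(F)) = phi(e). *)
Definition contains_Tr (VF : finType) (EF : {set {set VF}}) (n : nat)
    (H : {set {set 'I_n}}) : Prop :=
  exists (phi : VF -> 'I_n) (g : {set VF} -> {set 'I_n}),
    [/\ injective phi, {in EF &, injective g},
        forall e, e \in EF -> g e \in H &
        forall e, e \in EF -> g e :&: (phi @: [set: VF]) = phi @: e].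

Definition Tr_free (VF : finType) (EF : {set {set VF}}) (n : nat)
    (H : {set {set 'I_n}}) : Prop := ~ contains_Tr EF H.

From mathcomp Require Import all_boot.

Set Implicit Arguments. Unset Strict Implicit. Unset Printing Implicit Defensive.

(* Fix, for every vertex set A, one hyperedge of H containing A.  If an
   embedding f of F into the shadow of H were such that the fixed hyperedge
   through f(e) meets f(V(F)) exactly in f(e) for every edge e of F, these
   hyperedges would form a member of Tr(F) in H.  So in a Tr(F)-free H every
   embedding has an edge e and a vertex w outside e with f(w) in the fixed
   hyperedge through f(e).  For given e and w, the values of f off w can be
   chosen in at most n^(|V(F)|-1) ways, and then f(w) lies in a set of at most
   r vertices determined by them; summing over the pairs (e, w) gives the
   bound. *)

Lemma leq_card_bigcup (T I : finType) (P : pred I) (A : I -> {set T}) :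
  #|\bigcup_(i | P i) A i| <= \sum_(i | P i) #|A i|.
Proof.
elim/big_rec2: _ => [|i X m _ leXm]; first by rewrite cards0.
exact: leq_trans (leq_card_setU _ _) (leq_add _ leXm).
Qed.

Section ConstrainedValue.

Variables (A T : finType) (w : A) (r : nat) (S : {ffun A -> T} -> {set T}).
Hypothesis S_off_w :
  forall f g : {ffun A -> T}, (forall x, x != w -> f x = g x) -> S f = S g.
Hypothesis card_S : forall f, #|S f| <= r.

Let restr (f : {ffun A -> T}) : {ffun {x | x != w} -> T} := [ffun x => f (val x)].

Lemma restr_eq f g : restr f = restr g -> forall x, x != w -> f x = g x.
Proof. by move=> /ffunP fg x xw; have := fg (exist _ x xw); rewrite !ffunE. Qed.

Lemma card_fiber_restr g :
  #|[set f : {ffun A -> T} | (f w \in S f) && (restr f == g)]| <= r.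
Proof.
set X := [set f | _]; have [->|[f0 Xf0]] := set_0Vmem X; first by rewrite cards0.
have agree f : f \in X -> forall x, x != w -> f x = f0 x.
  move: Xf0; rewrite !inE => /andP[_ /eqP <-] /andP[_ /eqP]; exact: restr_eq.
rewrite -(@card_in_imset _ _ (fun f : {ffun A -> T} => f w)) => [|f1 f2 Xf1 Xf2 /= eq_w].
  apply: leq_trans (card_S f0); apply: subset_leq_card.
  apply/subsetP => _ /imsetP[f Xf ->]; move: (Xf); rewrite inE => /andP[Sf _].
  by rewrite -(S_off_w (agree f Xf)).
apply/ffunP => x; have [->//|xw] := eqVneq x w.
by rewrite (agree f1 Xf1 x xw) (agree f2 Xf2 x xw).
Qed.

Lemma card_constrained_value :
  #|[set f : {ffun A -> T} | f w \in S f]| <= r * #|T| ^ (#|A| - 1).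
Proof.
rewrite -sum1dep_card (partition_big restr predT) //=.
under eq_bigr do rewrite sum1dep_card.
apply: (@leq_trans (\sum_(g : {ffun {x | x != w} -> T}) r)).
  by apply: leq_sum => g _; apply: card_fiber_restr.
rewrite sum_nat_const card_ffun card_sig mulnC subn1 -(cardC1 w).
by apply: eq_leq; congr (_ * _ ^ _); apply: eq_card.
Qed.

End ConstrainedValue.

(* junk value [set0] when no hyperedge contains A *)
Definition host_edge (n : nat) (H : {set {set 'I_n}}) (A : {set 'I_n}) : {set 'I_n} :=
  odflt set0 [pick h in H | A \subset h].

Section HostEdge.

Variables (n : nat) (H : {set {set 'I_n}}).

Lemma card_host_edge r (A : {set 'I_n}) : is_uniform r H -> #|host_edge H A| <= r.
Proof.
move=> unifH; rewrite /host_edge.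
by case: pickP => [h /andP[/unifH ->]|] //= _; rewrite cards0.
Qed.

Lemma host_edgeP (A h : {set 'I_n}) : h \in H -> A \subset h ->
  host_edge H A \in H /\ A \subset host_edge H A.
Proof.
move=> Hh Ah; rewrite /host_edge; case: pickP => [h' /andP[]|/(_ h)] //=.
by rewrite Hh Ah.
Qed.

Variables (VF : finType) (EF : {set {set VF}}).

Definition clashes (e : {set VF}) (w : VF) : {set {ffun VF -> 'I_n}} :=
  [set f : {ffun VF -> 'I_n} | f w \in host_edge H (f @: e)].

Lemma card_clashes r (e : {set VF}) (w : VF) : is_uniform r H -> w \notin e ->
  #|clashes e w| <= r * n ^ (#|VF| - 1).
Proof.
move=> unifH we; rewrite -[n in n ^ _]card_ord.
apply: card_constrained_value => [f g fg|f]; last exact: card_host_edge.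
congr (host_edge H _); apply: eq_in_imset => x xe.
by apply: fg; apply: contraNneq we => <-.
Qed.

Variable f : {ffun VF -> 'I_n}.
Hypothesis f_emb : f \in embeddings EF (shadow H).

Lemma contains_Tr_of_embedding :
  (forall e w, e \in EF -> w \notin e -> f w \notin host_edge H (f @: e)) ->
  contains_Tr EF H.
Proof.
move=> no_clash; move: f_emb; rewrite inE => /andP[/injectiveP f_inj /forallP f_edge].
have hostP e : e \in EF ->
    host_edge H (f @: e) \in H /\ f @: e \subset host_edge H (f @: e).
  move=> EFe; move: (implyP (f_edge e) EFe).
  rewrite inE => /andP[_ /existsP[h /andP[]]].
  exact: host_edgeP.
have trace e : e \in EF -> host_edge H (f @: e) :&: f @: [set: VF] = f @: e.
  move=> EFe; apply/setP => x; rewrite inE; apply/andP/idP => [[hx /imsetP[v _ xv]]|].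
    move: hx; rewrite xv; apply: contraLR => fv; apply: no_clash => //.
    by apply/negP => ve; rewrite imset_f in fv.
  move=> ex; split; first by apply: subsetP ex; case: (hostP e EFe).
  by case/imsetP: ex => v _ ->; rewrite imset_f.
exists f, (fun e : {set VF} => host_edge H (f @: e)).
split=> // [e1 e2 EFe1 EFe2 eq_host|e EFe].
  by apply: (imset_inj f_inj); rewrite -(trace e1 EFe1) -(trace e2 EFe2) eq_host.
by case: (hostP e EFe).
Qed.

Lemma Tr_free_embedding_clash : Tr_free EF H ->
  exists e w, [/\ e \in EF, w \notin e & f \in clashes e w].
Proof.
move=> TrF; case: (boolP [exists e, exists w, [&& e \in EF, w \notin e & f \in clashes e w]]).
  by case/existsP=> e /existsP[w /and3P[]]; exists e, w.
move=> /existsPn no_clash; case: TrF; apply: contains_Tr_of_embedding => e w EFe we.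
apply/negP => fw; move/existsPn: (no_clash e) => /(_ w).
by rewrite EFe we inE fw.
Qed.

End HostEdge.

Theorem proposition4 (VF : finType) (EF : {set {set VF}}) (r : nat) :
  is_graph EF -> 2 <= r ->
  exists C : nat, forall (n : nat) (H : {set {set 'I_n}}),
    is_uniform r H -> Tr_free EF H ->
    #|copies EF (shadow H)| <= C * n ^ (#|VF| - 1).
Proof.
move=> _ _; exists (#|{: {set VF} * VF}| * r) => n H unifH TrF.
have emb_clashes : embeddings EF (shadow H) \subset
    \bigcup_(p : {set VF} * VF | p.2 \notin p.1) clashes H p.1 p.2.
  apply/subsetP => f femb; have [e [w [_ we fw]]] := Tr_free_embedding_clash femb TrF.
  by apply/bigcupP; exists (e, w).
apply: leq_trans (leq_imset_card _ _) _.
apply: leq_trans (subset_leq_card emb_clashes) _.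
apply: leq_trans (leq_card_bigcup _ _) _.
apply: (@leq_trans (\sum_(p : {set VF} * VF | p.2 \notin p.1) r * n ^ (#|VF| - 1))).
  by apply: leq_sum => p; apply: card_clashes.
by rewrite sum_nat_const -mulnA leq_mul2r max_card orbT.
Qed.
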